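(* Let $G=(V,E)$, $k\ge 3$, the choice strings $c_{i,j}$ ($1\le i<j\le k$), $L=k+1$ and $d=k-2$ be as in the construction described in the context. If $G$ has a clique of size $k$, then there is a string $s$ of length $L$ such that every choice string $c_{i,j}$ has a substring $s_{i,j}$ of length $L$ with $d_H(s,s_{i,j})\le d$.
   Context: Let $G=(V,E)$ be an undirected simple graph with $V=\{v_1,\dots,v_n\}$ and edge set $E=\{e_1,\dots,e_m\}$, and let $k\ge 3$ be an integer; put $N=\binom{k}{2}$. The alphabet consists of pairwise distinct symbols: encoding symbols $\sigma_1,\dots,\sigma_n$, string identification symbols $\varphi_1,\dots,\varphi_N$, and a synchronizing symbol $\#$. Order the pairs $(i,j)$ with $1\le i<j\le k$ lexicographically, $(1,2),(1,3),\dots,(1,k),(2,3),\dots,(k-1,k)$, and let $i'$ denote the position of $(i,j)$ in this order. For an edge $e$ joining $v_r$ and $v_s$ with $r<s$ define $\mathrm{block}(i,j,e)=\varphi_{i'}^{\,i-1}\,\sigma_r\,\varphi_{i'}^{\,j-i-1}\,\sigma_s\,\varphi_{i'}^{\,k-j}\,\#$ (a string of length $k+1$), and the choice string $c_{i,j}=\mathrm{block}(i,j,e_1)\,\varphi_{i'}^{\,k}\,\mathrm{block}(i,j,e_2)\,\varphi_{i'}^{\,k}\cdots\varphi_{i'}^{\,k}\,\mathrm{block}(i,j,e_m)$. Set $L=k+1$ and $d=k-2$. $d_H$ denotes Hamming distance. *)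

From HB Require Import structures.
From mathcomp Require Import all_boot.
Set Implicit Arguments. Unset Strict Implicit. Unset Printing Implicit Defensive.

(* Alphabet: encoding symbols sigma_r (r a vertex index), string
   identification symbols phi_t (t = 1..N), and the synchronizing symbol #. *)
Inductive Sym := Sigma of nat | Phi of nat | Hash.

Definition Sym_eqb (a b : Sym) : bool :=
  match a, b with
  | Sigma x, Sigma y => x == y
  | Phi x, Phi y => x == y
  | Hash, Hash => true
  | _, _ => false
  end.

Lemma Sym_eqP : Equality.axiom Sym_eqb.
Proof.
case=> [x|x|] [y|y|] /=; try by constructor.
- by apply: (iffP eqP) => [->|[]].
- by apply: (iffP eqP) => [->|[]].
Qed.

HB.instance Definition _ := hasDecEq.Build Sym Sym_eqP.

(* A simple graph on vertices 0..n-1 (v_{r+1} <-> r) given by its list of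
   edges e_1..e_m, each edge {v_r, v_s} stored as the pair (r, s) with r < s. *)
Definition simple_graph (n : nat) (es : seq (nat * nat)) : Prop :=
  uniq es /\ all (fun e => (e.1 < e.2) && (e.2 < n)) es.

Definition adjacent (es : seq (nat * nat)) (u v : nat) : bool :=
  ((u, v) \in es) || ((v, u) \in es).

Definition has_clique (n : nat) (es : seq (nat * nat)) (k : nat) : Prop :=
  exists K : seq nat,
    [/\ uniq K, size K = k, all (fun v => v < n) K &
        {in K &, forall u v, u != v -> adjacent es u v}].

Definition pairs_lex (k : nat) : seq (nat * nat) :=
  [seq ij <- [seq (i, j) | i <- iota 1 k, j <- iota 1 k] | ij.1 < ij.2].

Definition pos (k i j : nat) : nat := (index (i, j) (pairs_lex k)).+1.

Definition block (k i j : nat) (e : nat * nat) : seq Sym :=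
  let p := Phi (pos k i j) in
  nseq (i - 1) p ++ [:: Sigma e.1] ++ nseq (j - i - 1) p ++ [:: Sigma e.2]
    ++ nseq (k - j) p ++ [:: Hash].

Definition choice_string (es : seq (nat * nat)) (k i j : nat) : seq Sym :=
  match es with
  | [::] => [::]
  | e :: es' => block k i j e ++
      flatten [seq nseq k (Phi (pos k i j)) ++ block k i j e' | e' <- es']
  end.

Definition hamming (s t : seq Sym) : nat :=
  count (fun p => p.1 != p.2) (zip s t).

From HB Require Import structures.
From mathcomp Require Import all_boot.
From mathcomp Require Import zify.

Set Implicit Arguments.
Unset Strict Implicit.
Unset Printing Implicit Defensive.

(* List a k-clique increasingly as v_1 < ... < v_k and take
   s = sigma_{v_1} ... sigma_{v_k} #.  For i < j the edge (v_i, v_j) yields the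
   substring block(i, j, (v_i, v_j)) of c_{i,j}; it agrees with s at positions
   i, j and k + 1, so it differs from s in at most k - 2 places. *)

Lemma hamming_leq_size (s t : seq Sym) : hamming s t <= size s.
Proof. by rewrite /hamming (leq_trans (count_size _ _)) // size_zip geq_minl. Qed.

Lemma hamming_cat (s1 s2 t1 t2 : seq Sym) : size s1 = size t1 ->
  hamming (s1 ++ s2) (t1 ++ t2) = hamming s1 t1 + hamming s2 t2.
Proof. by move=> eq_size; rewrite /hamming zip_cat // count_cat. Qed.

Lemma hamming_cat_cons (x : Sym) (s1 s2 t1 t2 : seq Sym) : size s1 = size t1 ->
  hamming (s1 ++ x :: s2) (t1 ++ x :: t2) = hamming s1 t1 + hamming s2 t2.
Proof. by move=> eq_size; rewrite hamming_cat // /hamming /= eqxx. Qed.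

Lemma cat_take_nth_drop2 (T : Type) (x0 : T) (s : seq T) (i j : nat) :
  i < j < size s ->
  s = take i s ++ nth x0 s i :: take (j - i.+1) (drop i.+1 s)
        ++ nth x0 s j :: drop j.+1 s.
Proof.
case/andP=> lt_ij lt_js.
have -> : drop j.+1 s = drop (j - i.+1).+1 (drop i.+1 s).
  by rewrite drop_drop; congr drop; lia.
have -> : nth x0 s j = nth x0 (drop i.+1 s) (j - i.+1).
  by rewrite nth_drop; congr nth; lia.
rewrite -drop_nth ?cat_take_drop -?drop_nth ?cat_take_drop //; last first.
  by rewrite size_drop; lia.
by rewrite (ltn_trans lt_ij).
Qed.

Lemma infix_flatten_map (T U : eqType) (f : U -> seq T) (x : U) (xs : seq U) :
  x \in xs -> infix (f x) (flatten (map f xs)).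
Proof.
by case/splitPr=> xs1 xs2; rewrite map_cat flatten_cat /=; apply: infix_infix.
Qed.

Lemma size_block (k i j : nat) (e : nat * nat) : 0 < i < j -> j <= k ->
  size (block k i j e) = k.+1.
Proof. by move=> ? ?; rewrite /block !size_cat !size_nseq /=; lia. Qed.

Lemma block_infix_choice_string (es : seq (nat * nat)) (k i j : nat) e :
  e \in es -> infix (block k i j e) (choice_string es k i j).
Proof.
case: es => [//|e1 es] /=; rewrite in_cons => /predU1P[->|e_es].
  exact: prefix_infix.
apply/infix_catl/(@catl_infix _ (nseq k (Phi (pos k i j)))).
exact: (infix_flatten_map (fun e => nseq k (Phi (pos k i j)) ++ block k i j e) e_es).
Qed.

Lemma hamming_sigma_block (vs : seq nat) (i j : nat) :
  0 < i < j -> j <= size vs ->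
  hamming (map Sigma vs ++ [:: Hash])
          (block (size vs) i j (nth 0 vs i.-1, nth 0 vs j.-1)) <= size vs - 2.
Proof.
move=> /andP[i_gt0 lt_ij] le_j.
set S := map Sigma vs; have size_S : size S = size vs by rewrite size_map.
have /(cat_take_nth_drop2 (Sigma 0)) S_split : i.-1 < j.-1 < size S by lia.
rewrite S_split !(nth_map 0) /block; try lia.
rewrite -catA cat_cons -catA cat_cons /=.
rewrite !hamming_cat_cons ?size_nseq ?size_takel ?size_drop; try lia.
apply: leq_trans (leq_add (hamming_leq_size _ _) (leq_add (hamming_leq_size _ _)
  (leq_add (hamming_leq_size _ _) (hamming_leq_size _ _)))) _.
rewrite !size_takel ?size_drop /=; lia.
Qed.

Lemma adjacent_edge (n : nat) (es : seq (nat * nat)) (u v : nat) :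
  simple_graph n es -> u < v -> adjacent es u v -> (u, v) \in es.
Proof.
case=> _ /allP es_oriented lt_uv /orP[//|/es_oriented /andP[lt_vu _]].
by have := ltn_trans lt_uv lt_vu; rewrite ltnn.
Qed.

Lemma sorted_clique (n : nat) (es : seq (nat * nat)) (k : nat) :
  simple_graph n es -> has_clique n es k ->
  exists K : seq nat, [/\ sorted ltn K, size K = k &
    {in K &, forall u v, u < v -> (u, v) \in es}].
Proof.
move=> G [K [uniq_K size_K _ clique_K]].
exists (sort leq K); split.
- by rewrite ltn_sorted_uniq_leq sort_uniq uniq_K (sort_sorted leq_total).
- by rewrite size_sort.
move=> u v; rewrite !mem_sort => uK vK lt_uv.
by apply: (adjacent_edge G lt_uv); rewrite clique_K // neq_ltn lt_uv.
Qed.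

Theorem proposition1 (n : nat) (es : seq (nat * nat)) (k : nat) :
  simple_graph n es -> 3 <= k -> has_clique n es k ->
  exists s : seq Sym, size s = k.+1 /\
    forall i j, 1 <= i -> i < j -> j <= k ->
      exists t : seq Sym, [/\ size t = k.+1, infix t (choice_string es k i j)
                            & hamming s t <= k - 2].
Proof.
move=> G _ /(sorted_clique G) [K [sorted_K size_K clique_K]].
exists (map Sigma K ++ [:: Hash]); split; first by rewrite size_cat size_map size_K addn1.
move=> i j i_gt0 lt_ij le_jk.
set a := nth 0 K i.-1; set b := nth 0 K j.-1.
have [aK bK] : a \in K /\ b \in K by split; apply: mem_nth; rewrite size_K; lia.
have lt_ab : a < b by apply: (sorted_ltn_nth ltn_trans) => //; rewrite ?inE ?size_K; lia.
exists (block k i j (a, b)); split.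
- by apply: size_block; lia.
- exact/block_infix_choice_string/clique_K.
- by rewrite -size_K hamming_sigma_block ?size_K ?i_gt0.
Qed.
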